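(* Let $n\ge 2$ and let $\theta$ be a Schwartz function on $\mathbb{R}^n$ whose Fourier transform $\widehat\theta$ is supported in $\mathcal{A}_{4^{-n-3},4\sqrt n}$ and equals $1$ on $\mathcal{A}_{4^{-n-2},2\sqrt n}$. There exists $\epsilon_1>0$ such that for every sufficiently large $R$ the following holds: for each $x\in\mathcal{A}_{4^{-n-2},2\sqrt n}$, each $t\in(0,1)$ and each $\xi'\in\mathbb{R}^n$ with $|\xi'|\le\epsilon_1R$, $$\Big|\int_{\mathbb{R}^n} e^{2\pi i\left[(x-\frac{2t\xi'}{R})\cdot\xi-\frac{t}{R}|\xi|^2\right]}\theta(\xi)\,d\xi-1\Big|<\frac12.$$
   Context: For $0<u<v$, $\mathcal{A}_{u,v}=\{x\in\mathbb{R}^n: u<|x|<v\}$. The Fourier transform is $\widehat f(\xi)=\int f(x)e^{-2\pi i x\cdot\xi}dx$. *)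

From HB Require Import structures.
From mathcomp Require Import all_boot all_order all_algebra.
From mathcomp Require Import all_classical all_reals all_analysis.

Set Implicit Arguments.
Unset Strict Implicit.
Unset Printing Implicit Defensive.
Import Order.TTheory GRing.Theory Num.Theory.
Import numFieldNormedType.Exports.
Local Open Scope classical_set_scope.
Local Open Scope ring_scope.

Section Defs.
Variable R : realType.

Definition dotv (n : nat) (x y : 'rV[R]_n) : R := \sum_(i < n) x ord0 i * y ord0 i.
Definition enorm (n : nat) (x : 'rV[R]_n) : R := Num.sqrt (dotv x x).

Definition annulus (n : nat) (u v : R) : set 'rV[R]_n :=
  [set x | u < enorm x < v].

Definition vcons (n : nat) (s : R) (v : 'rV[R]_n) : 'rV[R]_n.+1 :=
  \row_(i < n.+1) match unlift ord0 i with Some j => v ord0 j | None => s end.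

(* Lebesgue integral over R^n, computed as the iterated Lebesgue integral
   (coordinate by coordinate); by Fubini this is the Lebesgue integral on R^n
   for every integrable function (the only case used below). *)
Fixpoint integralRn (n : nat) : ('rV[R]_n -> R) -> R :=
  match n return ('rV[R]_n -> R) -> R with
  | 0 => fun f => f 0
  | n'.+1 => fun f =>
      Rintegral (@lebesgue_measure R) setT
        (fun s : R => integralRn (fun v : 'rV[R]_n' => f (vcons s v)))
  end.

Fixpoint pderiv (n : nat) (l : seq 'I_n) (f : 'rV[R]_n -> R) : 'rV[R]_n -> R :=
  match l with
  | [::] => f
  | i :: l' => fun x => 'D_(delta_mx 0 i : 'rV[R]_n) (pderiv l' f) x
  end.

Definition schwartz (n : nat) (f : 'rV[R]_n -> R) : Prop :=
  (forall (l : seq 'I_n) (x : 'rV[R]_n), differentiable (pderiv l f) x) /\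
  (forall (a : 'I_n -> nat) (l : seq 'I_n), exists C : R, forall x : 'rV[R]_n,
      `| (\prod_(i < n) x ord0 i ^+ a i) * pderiv l f x | <= C).

(* A complex-valued function on R^n is represented by its real part fr and
   imaginary part fi.  Complex modulus: *)
Definition cmod (a b : R) : R := Num.sqrt (a ^+ 2 + b ^+ 2).

(* Fourier transform  \hat f(xi) = \int f(x) e^{-2 pi i x.xi} dx,
   real and imaginary parts, for f = fr + i fi. *)
Definition fourier_re (n : nat) (fr fi : 'rV[R]_n -> R) (xi : 'rV[R]_n) : R :=
  integralRn (fun x => fr x * cos (2 * pi * dotv x xi) + fi x * sin (2 * pi * dotv x xi)).
Definition fourier_im (n : nat) (fr fi : 'rV[R]_n -> R) (xi : 'rV[R]_n) : R :=
  integralRn (fun x => fi x * cos (2 * pi * dotv x xi) - fr x * sin (2 * pi * dotv x xi)).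

(* \int e^{i phi(xi)} f(xi) dxi, real and imaginary parts, f = fr + i fi *)
Definition oscint_re (n : nat) (phi fr fi : 'rV[R]_n -> R) : R :=
  integralRn (fun xi => fr xi * cos (phi xi) - fi xi * sin (phi xi)).
Definition oscint_im (n : nat) (phi fr fi : 'rV[R]_n -> R) : R :=
  integralRn (fun xi => fr xi * sin (phi xi) + fi xi * cos (phi xi)).

End Defs.

(* The phase of the integral differs from the phase xi |-> 2 pi x.xi of the
   Fourier transform at -x, where it equals 1, by 2 pi (2t/R xi'.xi + t/R |xi|^2),
   which is at most 2 pi (2 eps1 + 1/R) (n + |xi|^2).  As e^{i phi} is 1-Lipschitz
   in phi and (n + |xi|^2) theta(xi) is integrable, the integral stays within
   O(2 eps1 + 1/R) of 1.  On sequentially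
   continuous f with |f| <= C prod_i (1 + x_i^2)^-1 it is linear and bounded by
   C pi^n (the integral of the weight), by induction on n; dominated convergence
   is carried along the induction because it gives the continuity, hence the
   measurability, of s |-> int f(s, v) dv. *)

From HB Require Import structures.
From mathcomp Require Import all_boot all_order all_algebra.
From mathcomp Require Import all_classical all_reals all_analysis.
From mathcomp Require Import measurable_realfun ring lra.
Import Order.TTheory GRing.Theory Num.Theory.
Import numFieldNormedType.Exports.
Local Open Scope classical_set_scope.
Local Open Scope ring_scope.
Set Implicit Arguments.
Unset Strict Implicit.
Unset Printing Implicit Defensive.

Section oneDsqrV.
Variable R : realType.
Local Notation mu := (@lebesgue_measure R).

Lemma oneDsqrV_gt0 (s : R) : 0 < (oneDsqr s)^-1.
Proof. by rewrite invr_gt0 (lt_le_trans ltr01) ?oneDsqr_ge1. Qed.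

Lemma measurable_oneDsqrV : measurable_fun setT (fun s : R => (oneDsqr s)^-1).
Proof. exact: continuous_measurable_fun continuous_oneDsqrV. Qed.

Lemma integral_oneDsqrV : (\int[mu]_x (oneDsqr x)^-1%:E = pi%:E)%E.
Proof.
have mV (A : set R) : measurable_fun A (fun x => ((oneDsqr x)^-1)%:E).
  by apply/measurable_EFinP; exact: measurable_funTS measurable_oneDsqrV.
have -> : [set: R] = `]-oo, (- 0)%R] `|` `]0, +oo[.
  apply/seteqP; split=> x // _; rewrite /= oppr0 !in_itv /= andbT.
  by case: (leP x 0) => h; [left|right].
rewrite ge0_integral_setU //=; last 2 first.
- exact: mV.
- apply/disj_setPS => x [] /=; rewrite oppr0 !in_itv /= andbT => x0 x0'.
  by move: (le_lt_trans x0 x0'); rewrite ltxx.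
rewrite ge0_integration_by_substitutionNy; last 2 first.
- by apply: continuous_subspaceT => x; exact: continuous_oneDsqrV.
- by move=> x _; rewrite ltW// oneDsqrV_gt0.
rewrite integral_itv_obnd_cbnd //.
under eq_integral do rewrite /= /oneDsqr sqrrN.
by rewrite integral0y_oneDsqr -EFinD -splitr.
Qed.

Lemma integrable_oneDsqrV : mu.-integrable setT (EFin \o fun s => (oneDsqr s)^-1).
Proof.
apply/integrableP; split; first by apply/measurable_EFinP; exact: measurable_oneDsqrV.
apply: le_lt_trans (ltry pi); rewrite -integral_oneDsqrV le_eqVlt; apply/predU1P; left.
apply: eq_integral => x _; rewrite gee0_abs // lee_fin ltW // oneDsqrV_gt0.
Qed.

Lemma Rintegral_oneDsqrV : Rintegral mu setT (fun s => (oneDsqr s)^-1) = pi.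
Proof. by rewrite /Rintegral integral_oneDsqrV. Qed.

Lemma integrable_scaled_oneDsqrV (c : R) :
  mu.-integrable setT (EFin \o fun s => c * (oneDsqr s)^-1).
Proof. exact: (integrableZl _ _ integrable_oneDsqrV). Qed.

End oneDsqrV.

Section dominated_Rintegral.
Variable R : realType.
Local Notation mu := (@lebesgue_measure R).

Lemma Rintegrable_dominated (f g : R -> R) : measurable_fun setT f ->
  mu.-integrable setT (EFin \o g) -> (forall x, `|f x| <= g x) ->
  mu.-integrable setT (EFin \o f).
Proof.
move=> mf ig fg; apply: le_integrable ig => //; first exact/measurable_EFinP.
by move=> x _; rewrite /= lee_fin (le_trans (fg x)) ?ler_norm.
Qed.

Lemma cvg_Rintegral_dominated (fk : nat -> R -> R) (f g : R -> R) :
  (forall k, measurable_fun setT (fk k)) -> measurable_fun setT f ->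
  (forall x, fk k x @[k --> \oo] --> f x) ->
  mu.-integrable setT (EFin \o g) ->
  (forall k x, `|fk k x| <= g x) -> (forall x, `|f x| <= g x) ->
  Rintegral mu setT (fk k) @[k --> \oo] --> Rintegral mu setT f.
Proof.
move=> mfk mf fk_f ig fkg fg.
have intf := Rintegrable_dominated mf ig fg.
apply: fine_cvg; rewrite fineK; last exact: integrable_fin_num.
apply: (@dominated_cvg _ _ _ mu _ _ (fun k x => (fk k x)%:E) _ (EFin \o g)) => //=.
- by move=> k; apply/measurable_EFinP; exact: mfk.
- by move=> x _; apply: cvg_EFin; [exact: nearW | exact: fk_f].
- by move=> k x _; rewrite lee_fin.
Qed.

End dominated_Rintegral.

Section cauchy_weight.
Variable R : realType.
Implicit Types n : nat.

Definition cauchy_wt n (x : 'rV[R]_n) : R := \prod_(i < n) (oneDsqr (x ord0 i))^-1.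

Definition wt_dominated n (f : 'rV[R]_n -> R) (C : R) :=
  forall x, `|f x| <= C * cauchy_wt x.

Definition coord_cvg n (u : nat -> 'rV[R]_n) (x : 'rV[R]_n) :=
  forall i, u k ord0 i @[k --> \oo] --> x ord0 i.

(* Continuity along coordinatewise convergent sequences passes directly to the
   sections [fun v => f (vcons s v)]. *)
Definition seq_continuous n (f : 'rV[R]_n -> R) :=
  forall u x, coord_cvg u x -> f (u k) @[k --> \oo] --> f x.

Lemma cauchy_wt_gt0 n (x : 'rV[R]_n) : 0 < cauchy_wt x.
Proof. by apply: prodr_gt0 => i _; exact: oneDsqrV_gt0. Qed.

Lemma wt_dominated_ge0 n (f : 'rV[R]_n -> R) C : wt_dominated f C -> 0 <= C.
Proof.
by move=> fC; have := le_trans (normr_ge0 (f 0)) (fC 0); rewrite pmulr_lge0 ?cauchy_wt_gt0.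
Qed.

Lemma vcons_ord0 n s (v : 'rV[R]_n) : vcons s v ord0 ord0 = s.
Proof. by rewrite /vcons mxE unlift_none. Qed.

Lemma vcons_lift n s (v : 'rV[R]_n) i : vcons s v ord0 (lift ord0 i) = v ord0 i.
Proof. by rewrite /vcons mxE liftK. Qed.

Lemma cauchy_wt_vcons n s (v : 'rV[R]_n) :
  cauchy_wt (vcons s v) = (oneDsqr s)^-1 * cauchy_wt v.
Proof.
rewrite /cauchy_wt big_ord_recl vcons_ord0; congr (_ * _).
by apply: eq_bigr => i _; rewrite vcons_lift.
Qed.

Lemma wt_dominated_vcons n (f : 'rV[R]_n.+1 -> R) C s : wt_dominated f C ->
  wt_dominated (fun v => f (vcons s v)) (C * (oneDsqr s)^-1).
Proof. by move=> fC v; rewrite -mulrA -cauchy_wt_vcons. Qed.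

Lemma wt_dominated_vcons_unif n (f : 'rV[R]_n.+1 -> R) C s : wt_dominated f C ->
  wt_dominated (fun v => f (vcons s v)) C.
Proof.
move=> fC v; apply: le_trans (wt_dominated_vcons s fC v) _.
rewrite ler_wpM2r ?(ltW (cauchy_wt_gt0 v)) //.
by rewrite ler_piMr ?oneDsqrV_le1 // (wt_dominated_ge0 fC).
Qed.

Lemma coord_cvg_vconsl n (sk : nat -> R) s (v : 'rV[R]_n) :
  sk k @[k --> \oo] --> s -> coord_cvg (fun k => vcons (sk k) v) (vcons s v).
Proof.
move=> sk_s i; rewrite /vcons; under eq_cvg do rewrite mxE.
by rewrite mxE; case: (unlift ord0 i) => [j|] //; exact: cvg_cst.
Qed.

Lemma coord_cvg_vconsr n s (u : nat -> 'rV[R]_n) v :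
  coord_cvg u v -> coord_cvg (fun k => vcons s (u k)) (vcons s v).
Proof.
move=> u_v i; rewrite /vcons; under eq_cvg do rewrite mxE.
by rewrite mxE; case: (unlift ord0 i) => [j|]; [exact: u_v | exact: cvg_cst].
Qed.

Lemma seq_continuous_vcons n (f : 'rV[R]_n.+1 -> R) s :
  seq_continuous f -> seq_continuous (fun v => f (vcons s v)).
Proof. by move=> cf u x u_x; apply: cf; exact: coord_cvg_vconsr. Qed.

Lemma coord_cvg_cvg n (u : nat -> 'rV[R]_n) x : coord_cvg u x -> u k @[k --> \oo] --> x.
Proof.
move=> u_x; apply/cvg_ballP => e e0.
have /filter_forall : forall i : 'I_n, \forall k \near \oo, ball (x ord0 i) e (u k ord0 i).
  by move=> i; have /cvg_ballP := u_x i; apply.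
by apply: filterS => k uk; split => // i j; rewrite [i]ord1; exact: uk.
Qed.

Lemma continuous_seq_continuous n (f : 'rV[R]_n -> R) : continuous f -> seq_continuous f.
Proof. by move=> cf u x /coord_cvg_cvg u_x; exact: cvg_comp u_x (cf x). Qed.

Lemma seq_continuous_cst n (c : R) : seq_continuous (fun _ : 'rV[R]_n => c).
Proof. by move=> u x _; exact: cvg_cst. Qed.

Lemma seq_continuous_coord n (i : 'I_n) : seq_continuous (fun x : 'rV[R]_n => x ord0 i).
Proof. by move=> u x; apply. Qed.

Lemma seq_continuousN n (f : 'rV[R]_n -> R) : seq_continuous f ->
  seq_continuous (fun x => - f x).
Proof. by move=> cf u x u_x; apply: cvgN; exact: cf. Qed.

Lemma seq_continuousD n (f g : 'rV[R]_n -> R) : seq_continuous f -> seq_continuous g ->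
  seq_continuous (fun x => f x + g x).
Proof. by move=> cf cg u x u_x; apply: cvgD; [exact: cf | exact: cg]. Qed.

Lemma seq_continuousB n (f g : 'rV[R]_n -> R) : seq_continuous f -> seq_continuous g ->
  seq_continuous (fun x => f x - g x).
Proof. by move=> cf cg u x u_x; apply: cvgB; [exact: cf | exact: cg]. Qed.

Lemma seq_continuousM n (f g : 'rV[R]_n -> R) : seq_continuous f -> seq_continuous g ->
  seq_continuous (fun x => f x * g x).
Proof. by move=> cf cg u x u_x; apply: cvgM; [exact: cf | exact: cg]. Qed.

Lemma seq_continuous_comp n (h : R -> R) (f : 'rV[R]_n -> R) : continuous h ->
  seq_continuous f -> seq_continuous (fun x => h (f x)).
Proof. by move=> ch cf u x u_x; exact: cvg_comp (cf u x u_x) (ch _). Qed.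

Lemma seq_continuous_sum n (F : 'I_n -> 'rV[R]_n -> R) :
  (forall i, seq_continuous (F i)) -> seq_continuous (fun x => \sum_(i < n) F i x).
Proof.
move=> cF u x u_x; elim: (index_enum _) => [|i s IHs].
  by under eq_cvg do rewrite big_nil; rewrite big_nil; exact: cvg_cst.
by under eq_cvg do rewrite big_cons; rewrite big_cons; apply: cvgD => //; exact: cF.
Qed.

Lemma seq_continuous_dotvr n (a : 'rV[R]_n) : seq_continuous (fun x => dotv a x).
Proof.
apply: seq_continuous_sum => i.
by apply: seq_continuousM; [exact: seq_continuous_cst | exact: seq_continuous_coord].
Qed.

Lemma seq_continuous_dotvv n : seq_continuous (fun x : 'rV[R]_n => dotv x x).
Proof. by apply: seq_continuous_sum => i; apply: seq_continuousM; exact: seq_continuous_coord. Qed.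

End cauchy_weight.

Section iterated_integral.
Variable R : realType.
Local Notation mu := (@lebesgue_measure R).

Definition integralRn_estimates n : Prop :=
  (forall (f : 'rV[R]_n -> R) C, seq_continuous f -> wt_dominated f C ->
     `|integralRn f| <= C * pi ^+ n) /\
  (forall (fk : nat -> 'rV[R]_n -> R) f C,
     (forall k, seq_continuous (fk k)) -> seq_continuous f ->
     (forall k, wt_dominated (fk k) C) -> wt_dominated f C ->
     (forall x, fk k x @[k --> \oo] --> f x) ->
     integralRn (fk k) @[k --> \oo] --> integralRn f).

Lemma integralRn_estimates0 : integralRn_estimates 0.
Proof.
split=> [f C _ fC | fk f C _ _ _ _ fk_f] /=; last exact: fk_f.
by have := fC 0; rewrite /cauchy_wt big_ord0 !mulr1.
Qed.

Section integralRn_step.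
Variable n : nat.
Hypothesis estimates_n : integralRn_estimates n.

Let F (f : 'rV[R]_n.+1 -> R) (s : R) := integralRn (fun v => f (vcons s v)).

Lemma integralRn_vcons_bound f C : seq_continuous f -> wt_dominated f C ->
  forall s, `|F f s| <= C * pi ^+ n * (oneDsqr s)^-1.
Proof.
move=> cf fC s; rewrite mulrAC; apply: estimates_n.1.
  exact: seq_continuous_vcons.
exact: wt_dominated_vcons.
Qed.

Lemma continuous_integralRn_vcons f C : seq_continuous f -> wt_dominated f C ->
  continuous (F f).
Proof.
move=> cf fC s; apply/(@cvg_nbhsP _ R^o) => u u_s.
apply: (estimates_n.2 _ _ C) => [k||k||v].
- exact: seq_continuous_vcons.
- exact: seq_continuous_vcons.
- exact: wt_dominated_vcons_unif.
- exact: wt_dominated_vcons_unif.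
- by apply: cf; exact: coord_cvg_vconsl.
Qed.

Lemma measurable_integralRn_vcons f C : seq_continuous f -> wt_dominated f C ->
  measurable_fun setT (F f).
Proof. by move=> cf fC; apply: continuous_measurable_fun; exact: continuous_integralRn_vcons cf fC. Qed.

Lemma integrable_integralRn_vcons f C : seq_continuous f -> wt_dominated f C ->
  mu.-integrable setT (EFin \o F f).
Proof.
move=> cf fC; apply: Rintegrable_dominated (integrable_scaled_oneDsqrV (C * pi ^+ n)) _.
  exact: measurable_integralRn_vcons cf fC.
exact: integralRn_vcons_bound.
Qed.

Lemma le_integralRnS (f : 'rV[R]_n.+1 -> R) C : seq_continuous f -> wt_dominated f C ->
  `|integralRn f| <= C * pi ^+ n.+1.
Proof.
move=> cf fC /=.
have -> : C * pi ^+ n.+1 = Rintegral mu setT (fun s => C * pi ^+ n * (oneDsqr s)^-1).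
  by rewrite RintegralZl ?Rintegral_oneDsqrV -?mulrA -?exprSr //; exact: integrable_oneDsqrV.
apply: le_trans (le_normr_Rintegral measurableT (integrable_integralRn_vcons cf fC)) _.
apply: le_Rintegral => //; last by move=> s _; exact: integralRn_vcons_bound.
  apply: Rintegrable_dominated (integrable_scaled_oneDsqrV (C * pi ^+ n)) _.
    by apply: measurableT_comp; [exact: normr_measurable | exact: measurable_integralRn_vcons cf fC].
  by move=> s; rewrite normr_id; exact: integralRn_vcons_bound.
exact: integrable_scaled_oneDsqrV.
Qed.

Lemma cvg_integralRnS (fk : nat -> 'rV[R]_n.+1 -> R) f C :
  (forall k, seq_continuous (fk k)) -> seq_continuous f ->
  (forall k, wt_dominated (fk k) C) -> wt_dominated f C ->
  (forall x, fk k x @[k --> \oo] --> f x) ->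
  integralRn (fk k) @[k --> \oo] --> integralRn f.
Proof.
move=> cfk cf fkC fC fk_f /=.
apply: (@cvg_Rintegral_dominated _ _ _ (fun s => C * pi ^+ n * (oneDsqr s)^-1)).
- by move=> k; exact: measurable_integralRn_vcons (cfk k) (fkC k).
- exact: measurable_integralRn_vcons cf fC.
- move=> s; apply: (estimates_n.2 _ _ (C * (oneDsqr s)^-1)) => [k||k||v].
  + exact: seq_continuous_vcons.
  + exact: seq_continuous_vcons.
  + exact: wt_dominated_vcons.
  + exact: wt_dominated_vcons.
  + exact: fk_f.
- exact: integrable_scaled_oneDsqrV.
- by move=> k; exact: integralRn_vcons_bound (cfk k) (fkC k).
- exact: integralRn_vcons_bound cf fC.
Qed.

End integralRn_step.

Lemma integralRn_estimates_all n : integralRn_estimates n.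
Proof.
elim: n => [|n IHn]; first exact: integralRn_estimates0.
by split; [exact: le_integralRnS | exact: cvg_integralRnS].
Qed.

Lemma le_integralRn n (f : 'rV[R]_n -> R) C : seq_continuous f -> wt_dominated f C ->
  `|integralRn f| <= C * pi ^+ n.
Proof. exact: (integralRn_estimates_all n).1. Qed.

Lemma integralRnB n (f g : 'rV[R]_n -> R) Cf Cg :
  seq_continuous f -> wt_dominated f Cf -> seq_continuous g -> wt_dominated g Cg ->
  integralRn (fun x => f x - g x) = integralRn f - integralRn g.
Proof.
elim: n f g Cf Cg => [//|n IHn] f g Cf Cg cf fC cg gC /=.
rewrite -RintegralB //; last 2 first.
- exact: (integrable_integralRn_vcons (integralRn_estimates_all n) cf fC).
- exact: (integrable_integralRn_vcons (integralRn_estimates_all n) cg gC).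
congr Rintegral; apply/funext => s; apply: IHn.
- exact: seq_continuous_vcons.
- exact: wt_dominated_vcons.
- exact: seq_continuous_vcons.
- exact: wt_dominated_vcons.
Qed.

End iterated_integral.

Section schwartz_decay.
Variable R : realType.

Definition sum_oneDsqr n (x : 'rV[R]_n) : R := \sum_(i < n) oneDsqr (x ord0 i).

Lemma prod_oneDsqr_ge1 n (x : 'rV[R]_n) (P : pred 'I_n) :
  1 <= \prod_(i < n | P i) oneDsqr (x ord0 i).
Proof.
have := @ler_prod R _ (index_enum 'I_n) P (fun=> 1) (fun i => oneDsqr (x ord0 i)).
by rewrite big1_eq; apply => i _; rewrite ler01 oneDsqr_ge1.
Qed.

Lemma cauchy_wtE n (x : 'rV[R]_n) : cauchy_wt x = (\prod_(i < n) oneDsqr (x ord0 i))^-1.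
Proof. by rewrite /cauchy_wt prodfV. Qed.

Lemma sum_oneDsqr_ge n (x : 'rV[R]_n) : n%:R <= sum_oneDsqr x.
Proof.
have -> : n%:R = \sum_(i < n) (1 : R) by rewrite sumr_const card_ord.
by apply: ler_sum => i _; exact: oneDsqr_ge1.
Qed.

Lemma sum_oneDsqr_le_prod n (x : 'rV[R]_n) :
  sum_oneDsqr x <= n%:R * \prod_(i < n) oneDsqr (x ord0 i).
Proof.
set P := \prod_(i < n) _.
have -> : n%:R * P = \sum_(i < n) P by rewrite sumr_const card_ord mulr_natl.
apply: ler_sum => i _.
by rewrite /P (bigD1 i) //= ler_peMr ?prod_oneDsqr_ge1 // (le_trans ler01) ?oneDsqr_ge1.
Qed.

(* (1 + s^2)^2 <= 2 (1 + s^4), and expanding the product over the coordinates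
   leaves 2^n monomials x^a with exponents a_i in {0, 4}. *)
Lemma schwartz_prod_oneDsqr_bound n (f : 'rV[R]_n -> R) : schwartz f ->
  exists B, forall x, `|f x| * (\prod_(i < n) oneDsqr (x ord0 i)) ^+ 2 <= B.
Proof.
move=> [_ f_decay].
have [Cf hCf] := choice (fun a : 'I_n -> nat => f_decay a [::]).
pose e (b : {ffun 'I_n -> bool}) i := if b i then 4%N else 0%N.
exists (2 ^+ n * \sum_b Cf (e b)) => x.
have sq_le : (\prod_(i < n) oneDsqr (x ord0 i)) ^+ 2 <=
    \prod_(i < n) (2 * \sum_(j : bool) x ord0 i ^+ (if j then 4%N else 0%N)).
  rewrite -prodrXl; apply: ler_prod => i _; rewrite sqr_ge0 /= big_bool /= expr0.
  rewrite -subr_ge0 (_ : _ - _ = (1 - x ord0 i ^+ 2) ^+ 2) ?sqr_ge0 //.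
  by rewrite /oneDsqr; ring.
apply: le_trans (ler_wpM2l (normr_ge0 _) sq_le) _.
rewrite big_split /= prodr_const card_ord bigA_distr_bigA /=.
rewrite mulrCA ler_wpM2l ?exprn_ge0 // mulr_sumr; apply: ler_sum => b _.
apply: le_trans (hCf (e b) x); rewrite /= normrM mulrC ger0_norm //.
by apply: prodr_ge0 => i _; rewrite /e; case: (b i); rewrite ?expr0 // exprn_even_ge0.
Qed.

Lemma schwartz_wt_bound n (f : 'rV[R]_n -> R) : schwartz f ->
  exists A, forall x, `|f x| * sum_oneDsqr x <= A * cauchy_wt x.
Proof.
move=> /schwartz_prod_oneDsqr_bound[B fB]; exists (n%:R * B) => x.
set P := \prod_(i < n) oneDsqr (x ord0 i).
have P_gt0 : 0 < P by rewrite (lt_le_trans ltr01) ?prod_oneDsqr_ge1.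
apply: le_trans (ler_wpM2l (normr_ge0 _) (sum_oneDsqr_le_prod x)) _.
have -> : `|f x| * (n%:R * P) = n%:R * (`|f x| * P ^+ 2) * P^-1.
  by field; rewrite gt_eqF.
rewrite cauchy_wtE -/P ler_wpM2r ?invr_ge0 ?(ltW P_gt0) //.
exact: ler_wpM2l.
Qed.

Lemma schwartz_seq_continuous n (f : 'rV[R]_n -> R) : schwartz f -> seq_continuous f.
Proof.
move=> [f_diff _]; apply: continuous_seq_continuous => x.
exact: differentiable_continuous (f_diff [::] x).
Qed.

End schwartz_decay.

Section phase_estimates.
Variable R : realType.
Implicit Types n : nat.

Lemma ler_dist_derive1 (f f' : R -> R) : (forall x : R, is_derive x 1 f (f' x)) ->
  (forall x, `|f' x| <= 1) -> continuous f -> forall a b, `|f a - f b| <= `|a - b|.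
Proof.
move=> df f'1 cf; suff le_ab a b : b <= a -> `|f a - f b| <= `|a - b|.
  by move=> a b; case: (leP b a) => [|/ltW] /le_ab //; rewrite distrC (distrC a).
move=> ba; have [c _ ->] := MVT_segment ba (fun x _ => df x) (continuous_subspaceT cf).
by rewrite normrM ler_piMl.
Qed.

Lemma ler_dist_cos (a b : R) : `|cos a - cos b| <= `|a - b|.
Proof.
apply: (ler_dist_derive1 (f' := fun x => - sin x)) => [x|].
- by rewrite normrN sin_max.
- exact: continuous_cos.
Qed.

Lemma ler_dist_sin (a b : R) : `|sin a - sin b| <= `|a - b|.
Proof.
apply: (ler_dist_derive1 (f' := cos)) => [x|].
- exact: cos_max.
- exact: continuous_sin.
Qed.

Lemma dotvC n (x y : 'rV[R]_n) : dotv x y = dotv y x.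
Proof. by apply: eq_bigr => i _; rewrite mulrC. Qed.

Lemma dotvNr n (x y : 'rV[R]_n) : dotv x (- y) = - dotv x y.
Proof. by rewrite /dotv -sumrN; apply: eq_bigr => i _; rewrite mxE mulrN. Qed.

Lemma dotvBZl n (x y z : 'rV[R]_n) c : dotv (x - c *: y) z = dotv x z - c * dotv y z.
Proof.
rewrite /dotv mulr_sumr -sumrB; apply: eq_bigr => i _.
by rewrite !mxE mulrBl mulrA.
Qed.

Lemma enormN n (x : 'rV[R]_n) : enorm (- x) = enorm x.
Proof. by rewrite /enorm dotvNr dotvC dotvNr opprK. Qed.

Lemma annulusN n (u v : R) (x : 'rV[R]_n) : annulus u v (- x) = annulus u v x.
Proof. by rewrite /annulus /= enormN. Qed.

Lemma normr_le_oneDsqr (a : R) : `|a| <= oneDsqr a.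
Proof.
have := sqr_ge0 (`|a| - 1); rewrite sqrrB real_normK ?num_real // mulr1 expr1n /oneDsqr.
by have := normr_ge0 a; lra.
Qed.

Lemma coord_le_enorm n (y : 'rV[R]_n) i : `|y ord0 i| <= enorm y.
Proof.
rewrite /enorm -sqrtr_sqr ler_wsqrtr // /dotv (bigD1 i) //= expr2 lerDl.
by apply: sumr_ge0 => j _; rewrite -expr2 sqr_ge0.
Qed.

Lemma normr_dotv_le n (y z : 'rV[R]_n) : `|dotv y z| <= enorm y * sum_oneDsqr z.
Proof.
rewrite /dotv /sum_oneDsqr mulr_sumr (le_trans (ler_norm_sum _ _ _)) //.
apply: ler_sum => i _; rewrite normrM.
by apply: ler_pM => //; [exact: coord_le_enorm | exact: normr_le_oneDsqr].
Qed.

Lemma normr_dotvv_le n (z : 'rV[R]_n) : `|dotv z z| <= sum_oneDsqr z.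
Proof.
rewrite /dotv /sum_oneDsqr (le_trans (ler_norm_sum _ _ _)) //.
by apply: ler_sum => i _; rewrite normrM -expr2 real_normK ?num_real // lerDr.
Qed.

Lemma phase_perturbation_le n (x xi' xi : 'rV[R]_n) (t Rad eps : R) :
  0 < Rad -> 0 <= t <= 1 -> enorm xi' <= eps * Rad ->
  `|2 * pi * (dotv (x - (2 * t / Rad) *: xi') xi - t / Rad * dotv xi xi)
    - 2 * pi * dotv x xi| <= 2 * pi * (2 * eps + Rad^-1) * sum_oneDsqr xi.
Proof.
move=> Rad0 /andP[t0 t1] xi'_le.
have pi2_ge0 : 0 <= 2 * pi :> R by rewrite mulr_ge0 // ltW // pi_gt0.
have P_ge0 : 0 <= sum_oneDsqr xi by apply: sumr_ge0 => i _; rewrite (le_trans ler01) ?oneDsqr_ge1.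
have tR_ge0 : 0 <= t / Rad by rewrite divr_ge0 // ltW.
have tR_le : t / Rad <= Rad^-1 by rewrite ler_pdivrMr // mulVf ?gt_eqF.
have txi'_le : t / Rad * enorm xi' <= eps.
  by rewrite mulrAC ler_pdivrMr // (le_trans _ xi'_le) // ler_piMl ?sqrtr_ge0.
have lin_le : `|2 * (t / Rad) * dotv xi' xi| <= 2 * eps * sum_oneDsqr xi.
  have tR2_ge0 : 0 <= 2 * (t / Rad) by rewrite mulr_ge0.
  rewrite normrM (ger0_norm tR2_ge0).
  apply: le_trans (ler_wpM2l tR2_ge0 (normr_dotv_le _ _)) _.
  rewrite (_ : 2 * _ * (_ * _) = 2 * (t / Rad * enorm xi') * sum_oneDsqr xi); last by ring.
  by apply: ler_wpM2r => //; exact: ler_wpM2l.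
have quad_le : `|t / Rad * dotv xi xi| <= Rad^-1 * sum_oneDsqr xi.
  by rewrite normrM ger0_norm //; apply: ler_pM => //; exact: normr_dotvv_le.
rewrite dotvBZl (_ : _ - _ = - (2 * pi) * (2 * (t / Rad) * dotv xi' xi + t / Rad * dotv xi xi));
  last by ring.
rewrite normrM normrN (ger0_norm pi2_ge0) -[leRHS]mulrA.
apply: ler_wpM2l => //.
by rewrite [leRHS]mulrDl; apply: le_trans (ler_normD _ _) _; exact: lerD.
Qed.

Lemma seq_continuous_linear_phase n (a : 'rV[R]_n) :
  seq_continuous (fun xi => 2 * pi * dotv a xi).
Proof. by apply: seq_continuousM; [exact: seq_continuous_cst | exact: seq_continuous_dotvr]. Qed.

Lemma seq_continuous_phase n (a : 'rV[R]_n) (c : R) :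
  seq_continuous (fun xi => 2 * pi * (dotv a xi - c * dotv xi xi)).
Proof.
apply: seq_continuousM; first exact: seq_continuous_cst.
apply: seq_continuousB; first exact: seq_continuous_dotvr.
by apply: seq_continuousM; [exact: seq_continuous_cst | exact: seq_continuous_dotvv].
Qed.

Lemma perturbation_constant_lt (B M Rad : R) : 0 < M -> B < M -> 16 * pi * M <= Rad ->
  2 * (2 * pi * (2 * (32 * pi * M)^-1 + Rad^-1) * B) < 1 / 2.
Proof.
move=> M_gt0 BM RadM; have pi_gt0 : 0 < pi :> R := pi_gt0 R.
have Rad_gt0 : 0 < Rad by apply: lt_le_trans RadM; rewrite !mulr_gt0.
set D := 2 * pi * _.
have D_gt0 : 0 < D.
  apply: mulr_gt0; first exact: mulr_gt0.
  by apply: addr_gt0; rewrite ?invr_gt0 // mulr_gt0 // invr_gt0 !mulr_gt0.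
have DM_le : D * M <= 1 / 4.
  have -> : D * M = 1 / 8 + 2 * pi * M / Rad.
    by rewrite /D; move: (pi : R) pi_gt0 => p p_gt0; field; rewrite !gt_eqF.
  have : 2 * pi * M / Rad <= 1 / 8 by rewrite ler_pdivrMr //; lra.
  lra.
have : D * B < D * M by rewrite ltr_pM2l.
lra.
Qed.

Lemma cmod_le (a b : R) : cmod a b <= `|a| + `|b|.
Proof.
rewrite /cmod -(ger0_norm (addr_ge0 (normr_ge0 a) (normr_ge0 b))) -sqrtr_sqr.
rewrite ler_wsqrtr // sqrrD !real_normK ?num_real //.
have : 0 <= (`|a| * `|b|) *+ 2 by rewrite mulrn_wge0 // mulr_ge0.
lra.
Qed.

End phase_estimates.

Section cos_sin_comb.
Variables (R : realType) (n : nat).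
Implicit Types p q ph : 'rV[R]_n -> R.

Definition cos_sin_comb p q ph (xi : 'rV[R]_n) : R :=
  p xi * cos (ph xi) + q xi * sin (ph xi).

Lemma normr_cos_sin_comb_le p q ph xi : `|cos_sin_comb p q ph xi| <= `|p xi| + `|q xi|.
Proof.
apply: le_trans (ler_normD _ _) _; rewrite !normrM.
by apply: lerD; rewrite ler_piMr ?cos_max ?sin_max.
Qed.

Lemma dist_cos_sin_comb_le p q ph ph0 xi :
  `|cos_sin_comb p q ph xi - cos_sin_comb p q ph0 xi|
    <= (`|p xi| + `|q xi|) * `|ph xi - ph0 xi|.
Proof.
rewrite (_ : _ - _ = p xi * (cos (ph xi) - cos (ph0 xi)) + q xi * (sin (ph xi) - sin (ph0 xi)));
  last by rewrite /cos_sin_comb; ring.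
apply: le_trans (ler_normD _ _) _; rewrite !normrM mulrDl.
by apply: lerD; apply: ler_wpM2l => //; [exact: ler_dist_cos | exact: ler_dist_sin].
Qed.

Lemma seq_continuous_cos_sin_comb p q ph : seq_continuous p -> seq_continuous q ->
  seq_continuous ph -> seq_continuous (cos_sin_comb p q ph).
Proof.
move=> cp cq cph; apply: seq_continuousD; apply: seq_continuousM => //;
  apply: seq_continuous_comp cph; [exact: continuous_cos | exact: continuous_sin].
Qed.

Lemma dist_integralRn_cos_sin_comb_le p q ph ph0 (A D : R) : (0 < n)%N ->
  seq_continuous p -> seq_continuous q -> seq_continuous ph -> seq_continuous ph0 ->
  (forall xi, (`|p xi| + `|q xi|) * sum_oneDsqr xi <= A * cauchy_wt xi) ->
  (forall xi, `|ph xi - ph0 xi| <= D * sum_oneDsqr xi) ->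
  `|integralRn (cos_sin_comb p q ph) - integralRn (cos_sin_comb p q ph0)| <= D * A * pi ^+ n.
Proof.
move=> n_gt0 cp cq cph cph0 pqA phD.
have P_ge1 (xi : 'rV[R]_n) : 1 <= sum_oneDsqr xi.
  by apply: le_trans (sum_oneDsqr_ge xi); rewrite ler1n.
have pq_ge0 (xi : 'rV[R]_n) : 0 <= `|p xi| + `|q xi| by rewrite addr_ge0.
have D_ge0 : 0 <= D.
  by have := le_trans (normr_ge0 _) (phD 0); rewrite pmulr_lge0 // (lt_le_trans ltr01).
have comb_dom ph' : wt_dominated (cos_sin_comb p q ph') A.
  move=> xi; apply: le_trans (normr_cos_sin_comb_le _ _ _ _) _.
  by apply: le_trans (pqA xi); rewrite ler_peMr.
have ccomb ph' : seq_continuous ph' -> seq_continuous (cos_sin_comb p q ph').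
  exact: seq_continuous_cos_sin_comb.
rewrite -(integralRnB (ccomb _ cph) (comb_dom ph) (ccomb _ cph0) (comb_dom ph0)).
apply: (le_integralRn (C := D * A)); first by apply: seq_continuousB; exact: ccomb.
move=> xi /=; apply: le_trans (dist_cos_sin_comb_le _ _ _ _ _) _.
apply: le_trans (ler_wpM2l (pq_ge0 xi) (phD xi)) _.
by rewrite mulrCA -mulrA; apply: ler_wpM2l.
Qed.

End cos_sin_comb.

Section oscillatory_integral.
Variables (R : realType) (n : nat) (thr thi : 'rV[R]_n -> R).

Lemma oscint_reE ph :
  oscint_re ph thr thi = integralRn (cos_sin_comb thr (fun xi => - thi xi) ph).
Proof. by congr integralRn; apply/funext => xi; rewrite /cos_sin_comb mulNr. Qed.

Lemma oscint_imE ph : oscint_im ph thr thi = integralRn (cos_sin_comb thi thr ph).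
Proof. by congr integralRn; apply/funext => xi; rewrite /cos_sin_comb addrC. Qed.

Lemma fourier_re_oscint x :
  fourier_re thr thi (- x) = oscint_re (fun xi => 2 * pi * dotv x xi) thr thi.
Proof.
congr integralRn; apply/funext => xi.
by rewrite dotvNr dotvC mulrN cosN sinN mulrN.
Qed.

Lemma fourier_im_oscint x :
  fourier_im thr thi (- x) = oscint_im (fun xi => 2 * pi * dotv x xi) thr thi.
Proof.
congr integralRn; apply/funext => xi.
by rewrite dotvNr dotvC mulrN cosN sinN mulrN opprK addrC.
Qed.

Lemma oscint_perturbation_le (A D : R) (ph ph0 : 'rV[R]_n -> R) : (0 < n)%N ->
  seq_continuous thr -> seq_continuous thi ->
  (forall xi, (`|thr xi| + `|thi xi|) * sum_oneDsqr xi <= A * cauchy_wt xi) ->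
  seq_continuous ph -> seq_continuous ph0 ->
  (forall xi, `|ph xi - ph0 xi| <= D * sum_oneDsqr xi) ->
  cmod (oscint_re ph thr thi - oscint_re ph0 thr thi) (oscint_im ph thr thi - oscint_im ph0 thr thi)
    <= 2 * (D * A * pi ^+ n).
Proof.
move=> n_gt0 cr ci thA cph cph0 phD.
apply: le_trans (cmod_le _ _) _; rewrite mulr2n mulrDl mul1r !oscint_reE !oscint_imE.
apply: lerD; apply: dist_integralRn_cos_sin_comb_le => //.
- exact: seq_continuousN.
- by move=> xi; rewrite normrN.
- by move=> xi; rewrite addrC.
Qed.

End oscillatory_integral.

Theorem lemma2p2 (R : realType) (n : nat) (thr thi : 'rV[R]_n -> R) :
  (2 <= n)%N ->
  schwartz thr -> schwartz thi ->
  closure [set xi | fourier_re thr thi xi != 0 \/ fourier_im thr thi xi != 0]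
    `<=` annulus ((4 : R) ^- (n + 3)) (4 * Num.sqrt (n%:R)) ->
  (forall xi, annulus ((4 : R) ^- (n + 2)) (2 * Num.sqrt (n%:R)) xi ->
     fourier_re thr thi xi = 1 /\ fourier_im thr thi xi = 0) ->
  exists eps1 : R, 0 < eps1 /\
    exists R0 : R, forall Rad : R, R0 <= Rad ->
      forall (x : 'rV[R]_n) (t : R) (xi' : 'rV[R]_n),
        annulus ((4 : R) ^- (n + 2)) (2 * Num.sqrt (n%:R)) x ->
        0 < t < 1 ->
        enorm xi' <= eps1 * Rad ->
        let phi := fun xi : 'rV[R]_n =>
          2 * pi * (dotv (x - (2 * t / Rad) *: xi') xi - t / Rad * dotv xi xi) in
        cmod (oscint_re phi thr thi - 1) (oscint_im phi thr thi) < 1 / 2.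
Proof.
move=> n_ge2 thr_sch thi_sch _ fourier_eq1.
have n_gt0 : (0 < n)%N by apply: leq_trans n_ge2.
have [Ar thrA] := schwartz_wt_bound thr_sch.
have [Ai thiA] := schwartz_wt_bound thi_sch.
have thA xi : (`|thr xi| + `|thi xi|) * sum_oneDsqr xi <= (Ar + Ai) * cauchy_wt xi.
  by rewrite !mulrDl lerD.
pose M := `|Ar + Ai| * pi ^+ n + 1.
have M_gt0 : 0 < M by rewrite ltr_wpDl // mulr_ge0 // exprn_ge0 // ltW // pi_gt0.
exists (32 * pi * M)^-1; split; first by rewrite invr_gt0 !mulr_gt0 // pi_gt0.
exists (16 * pi * M) => Rad RadM x t xi' x_ann /andP[t_gt0 t_lt1] xi'_le /=.
move: x_ann; rewrite -annulusN => /fourier_eq1[re1 im0].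
rewrite -[X in cmod (_ - X) _]re1 -[oscint_im _ _ _]subr0 -im0.
rewrite fourier_re_oscint fourier_im_oscint.
set D := 2 * pi * (2 * (32 * pi * M)^-1 + Rad^-1).
apply: le_lt_trans (oscint_perturbation_le (D := D) n_gt0 (schwartz_seq_continuous thr_sch)
  (schwartz_seq_continuous thi_sch) thA _ _ _) _.
- exact: seq_continuous_phase.
- exact: seq_continuous_linear_phase.
- move=> xi; apply: phase_perturbation_le => //; last by rewrite !ltW.
  by apply: lt_le_trans RadM; rewrite !mulr_gt0 // pi_gt0.
rewrite -mulrA; apply: perturbation_constant_lt RadM => //.
rewrite /M ltr_pwDr ?ltr01 //; apply: ler_wpM2r; last exact: ler_norm.
by rewrite exprn_ge0 // ltW // pi_gt0.
Qed.
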